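(* Let $G_7=K_1+P_6$ be the graph obtained from the path $P_6$ on six vertices by adding one new vertex adjacent to all six vertices of the path. Then $G_7$ is outerplanar and $\chi_{\mathrm{so}}(G_7)=7$.
   Context: All graphs are finite, simple and undirected. A strong odd coloring of a graph $G$ is a proper vertex coloring of $G$ such that for every non-isolated vertex $v$ and every color $c$, either no vertex of the open neighborhood $N_G(v)$ has color $c$, or color $c$ is used on an odd number of vertices of $N_G(v)$. The strong odd chromatic number $\chi_{\mathrm{so}}(G)$ is the minimum number of colors in a strong odd coloring of $G$. A graph is outerplanar if it has a plane embedding in which all vertices lie on the boundary of a single face. *)

From mathcomp Require Import all_boot.
Set Implicit Arguments. Unset Strict Implicit. Unset Printing Implicit Defensive.

(* A finite simple graph is given by a vertex type T : finType and an
   adjacency relation e : rel T (intended symmetric and irreflexive). *)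

Definition nbhd (T : finType) (e : rel T) (v : T) : {set T} := [set u | e v u].

Definition non_isolated (T : finType) (e : rel T) (v : T) : bool := [exists u, e v u].

Definition strong_odd_coloring (T : finType) (e : rel T) (k : nat) (c : T -> 'I_k) : Prop :=
  (forall x y, e x y -> c x != c y) /\
  (forall v, non_isolated e v -> forall col : 'I_k,
     let n := #|[set u in nbhd e v | c u == col]| in (n == 0) || odd n).

Definition so_colorable (T : finType) (e : rel T) (k : nat) : Prop :=
  exists c : T -> 'I_k, strong_odd_coloring e c.

Definition chi_so_eq (T : finType) (e : rel T) (m : nat) : Prop :=
  so_colorable e m /\ forall k, so_colorable e k -> m <= k.

(* Outerplanarity, via the standard combinatorial description of an outerplane
   embedding: the vertices are placed in a cyclic order on a circle (the
   boundary of the outer face) and the edges are drawn as chords inside it,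
   no two of which cross.  pos gives the (injective) position of each vertex
   along the circle; two edges {a,b}, {c,d} cross iff their endpoints
   interleave: pos a < pos c < pos b < pos d. *)
Definition outerplanar (T : finType) (e : rel T) : Prop :=
  exists pos : T -> nat, injective pos /\
    forall a b c d, e a b -> e c d ->
      ~ (pos a < pos c /\ pos c < pos b /\ pos b < pos d).

(* G_7 = K_1 + P_6: vertices 0..5 form the path 0-1-2-3-4-5,
   vertex 6 is adjacent to all of them. *)
Definition G7 : rel 'I_7 :=
  fun i j => (i != j) &&
    [|| (val i == 6), (val j == 6), (val i).+1 == val j | (val j).+1 == val i].

(* Every colour class S of a strong odd coloring is independent and meets
   each neighbourhood in zero or an odd number of vertices.  In G_7 such a
   set has at most one vertex, so all seven vertices get distinct colours.
   Indeed, if |S| >= 2 then S avoids the apex, which is adjacent to all of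
   S, so |S| is odd and hence at least 3.  Two vertices of S at distance 1
   along the path are adjacent, and two at distance 2 have a common path
   neighbour seeing exactly two vertices of S; so the vertices of S are at
   least 3 apart, and three of them do not fit on a path of six vertices.
   Placing the apex first on the circle and the path after it in order
   exhibits G_7 as a fan, whose chords do not cross. *)
From mathcomp Require Import all_boot zify.

Set Implicit Arguments.
Unset Strict Implicit.
Unset Printing Implicit Defensive.

Section StrongOddColoring.

Variables (T : finType) (e : rel T).

Definition odd_independent (S : {set T}) : bool :=
  [forall x in S, forall y in S, ~~ e x y] &&
  [forall v, let n := #|nbhd e v :&: S| in (n == 0) || odd n].

Lemma color_class_odd_independent k (c : T -> 'I_k) (col : 'I_k) :
  strong_odd_coloring e c -> odd_independent [set u | c u == col].
Proof.
move=> [proper oddc]; apply/andP; split.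
  apply/forall_inP => x; rewrite inE => /eqP cx; apply/forall_inP => y.
  rewrite inE => /eqP cy; apply/negP => /proper.
  by rewrite cx cy eqxx.
apply/forallP => v /=.
have -> : nbhd e v :&: [set u | c u == col] = [set u in nbhd e v | c u == col].
  by apply/setP => u; rewrite !inE.
have [/oddc/(_ col) // | isolated_v] := boolP (non_isolated e v).
suff -> : [set u in nbhd e v | c u == col] = set0 by rewrite cards0.
apply/setP => u; rewrite !inE; apply/negbTE/nandP; left.
by apply: contra isolated_v => evu; apply/existsP; exists u.
Qed.

Lemma injective_strong_odd_coloring k (c : T -> 'I_k) :
  irreflexive e -> injective c -> strong_odd_coloring e c.
Proof.
move=> e_irr c_inj; split=> [x y exy | v _ col /=].
  by rewrite (inj_eq c_inj); apply: contraTneq exy => ->; rewrite e_irr.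
have : #|[set u in nbhd e v | c u == col]| <= 1.
  apply/card_le1_eqP => x y; rewrite !inE => /andP[_ /eqP cx] /andP[_ /eqP cy].
  by apply: c_inj; rewrite cx cy.
by case: #|_| => [|[|]].
Qed.

Lemma odd_independent_universal a S :
  (forall v, v != a -> e a v) -> odd_independent S -> 1 < #|S| ->
  a \notin S /\ odd #|S|.
Proof.
move=> a_univ /andP[/forall_inP indep /forallP oddS] S_gt1.
have /card_gt1P[x [y [xS yS xy]]] := S_gt1.
have aNS : a \notin S.
  apply/negP => aS.
  have eq_a u : u \in S -> u = a.
    move=> uS; apply/eqP/negP => /negP/a_univ eau.
    by have /forall_inP/(_ u uS) := indep a aS; rewrite eau.
  by move/eqP: xy; rewrite (eq_a x xS) (eq_a y yS).
have NaS : nbhd e a :&: S = S.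
  apply/setIidPr/subsetP => u uS; rewrite inE a_univ //.
  by apply: contraNneq aNS => <-.
split=> //; move: (oddS a) S_gt1; rewrite /= NaS.
by case: #|S| => [|[|]].
Qed.

Hypothesis odd_independent_le1 : forall S, odd_independent S -> #|S| <= 1.

Lemma strong_odd_coloring_inj k (c : T -> 'I_k) :
  strong_odd_coloring e c -> injective c.
Proof.
move=> soc x y cxy.
have /card_le1_eqP := odd_independent_le1 (color_class_odd_independent (c x) soc).
by apply; rewrite inE ?cxy.
Qed.

Lemma so_colorable_card_le k : so_colorable e k -> #|T| <= k.
Proof.
by move=> [c /strong_odd_coloring_inj c_inj]; rewrite -[k]card_ord (leq_card _ c_inj).
Qed.

End StrongOddColoring.

Lemma chi_so_eq_order n (e : rel 'I_n) :
  irreflexive e -> (forall S, odd_independent e S -> #|S| <= 1) ->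
  chi_so_eq e n.
Proof.
move=> e_irr small; split.
  by exists id; apply: injective_strong_odd_coloring.
by move=> k /(so_colorable_card_le small); rewrite card_ord.
Qed.

Lemma G7_irreflexive : irreflexive G7.
Proof. by move=> i; rewrite /G7 eqxx. Qed.

Local Notation apex := (@ord_max 6).

Lemma G7_apex v : v != apex -> G7 apex v.
Proof. by move=> vN; rewrite /G7 eq_sym vN eqxx. Qed.

Lemma G7_path_vertex (S : {set 'I_7}) u : apex \notin S -> u \in S -> u < 6.
Proof.
move=> apexNS uS; have := ltn_ord u; rewrite ltnS leq_eqVlt => /orP[/eqP u6|//].
by move: apexNS; rewrite (_ : apex = u) ?uS //; apply: val_inj.
Qed.

Lemma G7_odd_independent_gap (S : {set 'I_7}) x y :
  odd_independent G7 S -> apex \notin S -> x \in S -> y \in S ->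
  x < y -> x + 3 <= y.
Proof.
move=> /andP[/forall_inP indep /forallP oddS] apexNS xS yS xy.
have y_lt6 := G7_path_vertex apexNS yS.
rewrite leqNgt; apply/negP => close.
have y_eq : y = x.+2 :> nat.
  by move: (forall_inP (indep x xS) y yS); rewrite /G7 -[x == y]val_eqE /=; lia.
have m_lt : x.+1 < 7 by lia.
pose m := Ordinal m_lt.
have Nm : nbhd G7 m :&: S = [set x; y].
  apply/setP => u; rewrite !inE; case uS : (u \in S); last first.
    by rewrite andbF; apply/esym/norP; split; apply: contraFneq uS => ->.
  have := G7_path_vertex apexNS uS.
  rewrite andbT /G7 -!val_eqE /=; lia.
by have := oddS m; rewrite /= Nm cards2 -val_eqE (ltn_eqF xy).
Qed.

Lemma G7_odd_independent_le1 S : odd_independent G7 S -> #|S| <= 1.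
Proof.
move=> oiS; rewrite leqNgt; apply/negP => S_gt1.
have [apexNS odd_S] := odd_independent_universal G7_apex oiS S_gt1.
have /card_gt2P[x [y [z [[xS yS zS] [xy yz zx]]]]] : 2 < #|S|.
  by move: S_gt1 odd_S; case: #|S| => [|[|[|]]].
have gap u v : u \in S -> v \in S -> u != v -> (u + 3 <= v) || (v + 3 <= u).
  move=> uS vS; rewrite -val_eqE; case: (ltngtP u v) => [uv|vu|//] _.
    by rewrite (G7_odd_independent_gap oiS apexNS uS vS uv).
  by rewrite (G7_odd_independent_gap oiS apexNS vS uS vu) orbT.
move: (gap x y xS yS xy) (gap y z yS zS yz) (gap z x zS xS zx).
move: (G7_path_vertex apexNS xS) (G7_path_vertex apexNS yS) (G7_path_vertex apexNS zS).
lia.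
Qed.

Lemma G7_outerplanar : outerplanar G7.
Proof.
exists (fun i : 'I_7 => i.+1 %% 7); split.
  move=> i j pos_ij; apply: val_inj; move: pos_ij (ltn_ord i) (ltn_ord j) => /=.
  lia.
move=> a b c d; rewrite /G7 -!val_eqE /=.
have := ltn_ord a; have := ltn_ord b; have := ltn_ord c; have := ltn_ord d.
lia.
Qed.

Theorem proposition3p2 : outerplanar G7 /\ chi_so_eq G7 7.
Proof.
split; first exact: G7_outerplanar.
exact: chi_so_eq_order G7_irreflexive G7_odd_independent_le1.
Qed.
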